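(* Let $n=2^m$ with $m\ge 4$ and let $\mathcal{Q}$ be the Steiner quadruple system of the extended Hamming code of length $n$. Then the set $C=\{x\subset\{1,\dots,n\}: |x|=6,\ \text{no block of }\mathcal{Q}\text{ is a subset of }x\}$ is a completely regular code in the Johnson graph $J(n,6)$ with covering radius $2$. Its distance partition is $(C^0,C^1,C^2)$, where $C^j$ is the set of $6$-subsets containing exactly $0$, $1$, $3$ blocks of $\mathcal{Q}$ for $j=0,1,2$ respectively; there are no edges between $C^0$ and $C^2$, and each vertex of $C^1$ is adjacent to exactly $6$ vertices of $C^2$.
   Context: The Johnson graph $J(n,k)$ has as vertices the $k$-element subsets of $\{1,\dots,n\}$, two being adjacent iff they meet in $k-1$ elements. The extended binary Hamming code of length $n=2^m$ is obtained by adding an overall parity bit to the binary Hamming code of length $2^m-1$; its Steiner quadruple system $\mathcal{Q}$ is the set of supports of its weight-$4$ codewords (a $3$-$(n,4,1)$ design). For a nonempty vertex set $C$ of a connected regular graph, $C_i$ is the set of vertices at distance exactly $i$ from $C$, the covering radius is the largest $i$ with $C_i\neq\emptyset$, and $C$ is completely regular if there are numbers $\gamma_i,\alpha_i,\beta_i$ such that every vertex of $C_i$ has exactly $\gamma_i$ neighbours in $C_{i-1}$, $\alpha_i$ in $C_i$, $\beta_i$ in $C_{i+1}$, for all $i$. *)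

From mathcomp Require Import all_boot.
Set Implicit Arguments. Unset Strict Implicit. Unset Printing Implicit Defensive.

Section Graph.
Variables (V : finType) (e : rel V).

Fixpoint reach (C : {set V}) (d : nat) : {set V} :=
  if d is d'.+1 then [set w | [exists v in reach C d', e v w]] else C.

Definition layer (C : {set V}) (i : nat) : {set V} :=
  reach C i :\: \bigcup_(j < i) reach C j.

Definition prev_layer (C : {set V}) (i : nat) : {set V} :=
  if i is i'.+1 then layer C i' else set0.

Definition nbrs_in (v : V) (A : {set V}) : nat := #|[set w in A | e v w]|.

Definition covering_radius (C : {set V}) (r : nat) : Prop :=
  layer C r != set0 /\ forall i, r < i -> layer C i = set0.

Definition completely_regular (C : {set V}) : Prop :=
  C != set0 /\
  exists gamma alpha beta : nat -> nat, forall i v, v \in layer C i ->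
    [/\ nbrs_in v (prev_layer C i) = gamma i,
        nbrs_in v (layer C i) = alpha i &
        nbrs_in v (layer C i.+1) = beta i].
End Graph.

Definition johnson_vertex (n k : nat) := {x : {set 'I_n} | #|x| == k}.

Definition johnson_adj (n k : nat) : rel (johnson_vertex n k) :=
  fun x y => #|val x :&: val y| == k.-1.

(* ---------- Extended binary Hamming code of length 2^m ----------
   Words of length 2^m are identified with their supports S.
   Coordinates i < 2^m - 1 are those of the Hamming code of length 2^m - 1,
   whose parity-check matrix has as i-th column the binary expansion of i+1
   (bit k of i+1 is odd ((i+1) %/ 2^k)); coordinate 2^m - 1 is the added
   overall parity bit. *)
Definition hamming_syndrome_zero (m : nat) (S : {set 'I_(2 ^ m)}) : bool :=
  [forall k : 'I_m,
     ~~ odd #|[set i in S | (i < 2 ^ m - 1) && odd ((i + 1) %/ 2 ^ k)]|].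

Definition parity_bit_ok (m : nat) (S : {set 'I_(2 ^ m)}) : bool :=
  [exists j in S, val j == 2 ^ m - 1]
    == odd #|[set i in S | i < 2 ^ m - 1]|.

Definition ext_hamming_codeword (m : nat) (S : {set 'I_(2 ^ m)}) : bool :=
  hamming_syndrome_zero S && parity_bit_ok S.

Definition hamming_SQS (m : nat) : {set {set 'I_(2 ^ m)}} :=
  [set B : {set 'I_(2 ^ m)} | (#|B| == 4) && ext_hamming_codeword B].

Definition nblocks (m : nat) (x : {set 'I_(2 ^ m)}) : nat :=
  #|[set B in hamming_SQS m | B \subset x]|.

Arguments johnson_adj : clear implicits.

From mathcomp Require Import all_boot.
From mathcomp Require Import ssralg zmodp zify.
Set Implicit Arguments. Unset Strict Implicit. Unset Printing Implicit Defensive.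
Import GRing.Theory.

(* The coordinates of the code are in bijection with F_2^m (the "columns" of
   its parity-check matrix), and a 4-set is a block of Q iff its columns sum to
   0.  We work abstractly with a finite set T in bijection with an elementary
   abelian 2-group G, a block being a 4-set of weight 0 (section Char2Weights).
   By complementation the blocks of a 6-set y are the pairs of y of weight
   wsum y, and a 5-set contains at most one block.  Counting the extensions
   b |: S of a 5-set S and summing over the six deletions x :\ a of a 6-set x
   shows that x contains 0, 1 or 3 blocks and that the number of neighbours
   of x with 0, 1, 3 blocks depends only on nblk x and #|T|. *)

Lemma setDDK (T : finType) (y B : {set T}) : B \subset y -> y :\: (y :\: B) = B.
Proof. by move=> By; rewrite setDDr setDv set0U (setIidPr By). Qed.

Lemma cardsDs (T : finType) (y B : {set T}) : B \subset y -> #|y :\: B| = #|y| - #|B|.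
Proof. by move=> By; rewrite cardsD (setIidPr By). Qed.

Lemma pair_with (T : finType) (P : {set T}) b : #|P| = 2 -> b \in P ->
  exists2 u, u != b & P = [set b; u].
Proof.
move/eqP/cards2P=> [x [y [xy ->]]]; rewrite !inE => /orP[]/eqP->.
  by exists y; rewrite // eq_sym.
by exists x => //; rewrite setUC.
Qed.

Lemma card_split (T : finType) (A : {set T}) (p : pred T) :
  #|[set b in A | p b]| + #|[set b in A | ~~ p b]| = #|A|.
Proof.
rewrite -(cardsID [set b | p b] A); congr (_ + _); apply: eq_card => b;
by rewrite !inE // andbC.
Qed.

Lemma sum_two_values (T : finType) (A : {set T}) (p : pred T) (F : T -> nat) c1 c0 :
  (forall a, a \in A -> F a = if p a then c1 else c0) ->
  \sum_(a in A) F a = #|[set a in A | p a]| * c1 + #|[set a in A | ~~ p a]| * c0.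
Proof.
move=> HF; rewrite (bigID p) /=; congr (_ + _);
  rewrite -sum_nat_cond_const; apply: eq_big => a; rewrite ?inE //;
  by case/andP=> aA pa; rewrite HF // ?pa ?(negbTE pa).
Qed.

Section Char2Weights.
Variables (T : finType) (G : zmodType) (f : T -> G) (h : G -> T).
Hypotheses (fK : cancel f h) (hK : cancel h f)
  (char2 : forall g : G, (g + g = 0)%R).

Lemma f_inj : injective f. Proof. exact: can_inj fK. Qed.

Lemma char2_eq (a b : G) : (a + b = 0)%R -> a = b.
Proof.
by move/eqP; rewrite addr_eq0 => /eqP->; apply/eqP; rewrite eq_sym -addr_eq0 char2.
Qed.

Lemma char2_addKr (a b : G) : (a + (a + b) = b)%R.
Proof. by rewrite addrA char2 add0r. Qed.

Lemma char2_cancel (a b c : G) : (a = b + (a + c))%R -> b = c.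
Proof.
move=> e; have := congr1 (+%R a) e; rewrite char2 addrCA char2_addKr.
by move/esym/char2_eq.
Qed.

Lemma fsum_neq0 (u v : T) : u != v -> (f u + f v != 0)%R.
Proof. by apply: contra => /eqP/char2_eq/f_inj/eqP. Qed.

Lemma shift_eq (x y : G) z : (y == x + f z)%R = (h (x + y)%R == z).
Proof.
apply/eqP/eqP => [->|<-]; first by rewrite char2_addKr fK.
by rewrite hK char2_addKr.
Qed.

Definition wsum (A : {set T}) : G := (\sum_(i in A) f i)%R.
Definition is_block (B : {set T}) := (#|B| == 4) && (wsum B == 0%R).
Definition nblk (A : {set T}) := #|[set B : {set T} | is_block B && (B \subset A)]|.
Definition pairs (A : {set T}) := [set P : {set T} | P \subset A & #|P| == 2].
Definition npairs (A : {set T}) (w : G) := #|[set P in pairs A | wsum P == w]|.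

(* The point whose weight is that of A: removing it from A, when it lies in A,
   leaves a set of weight 0. *)
Definition deficit (A : {set T}) := h (wsum A).

Lemma wsum1 x : wsum [set x] = f x. Proof. by rewrite /wsum big_set1. Qed.

Lemma wsumU (A B : {set T}) : [disjoint A & B] -> wsum (A :|: B) = (wsum A + wsum B)%R.
Proof. by move=> dAB; rewrite /wsum -bigU //; apply: eq_bigl => i; rewrite !inE. Qed.

Lemma wsumU1 x (A : {set T}) : x \notin A -> wsum (x |: A) = (f x + wsum A)%R.
Proof. by move=> xA; rewrite wsumU ?wsum1 // disjoints1. Qed.

Lemma wsum2 x y : x != y -> wsum [set x; y] = (f x + f y)%R.
Proof. by move=> xy; rewrite wsumU1 ?wsum1 // inE. Qed.

Lemma wsumD (A B : {set T}) : B \subset A -> wsum (A :\: B) = (wsum A + wsum B)%R.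
Proof.
move=> BA; have -> : wsum A = (wsum B + wsum (A :\: B))%R.
  rewrite -wsumU; first by rewrite -{1}(setID A B) (setIidPr BA).
  by rewrite disjoints_subset setCD subsetUr.
by rewrite addrC addrA char2 add0r.
Qed.

Lemma wsumD1 (A : {set T}) a : a \in A -> wsum (A :\ a) = (wsum A + f a)%R.
Proof. by move=> aA; rewrite wsumD ?sub1set // wsum1. Qed.

Lemma pairs_card (A P : {set T}) : P \in pairs A -> #|P| = 2.
Proof. by rewrite inE => /andP[_ /eqP]. Qed.

Lemma pairs_sub (A P : {set T}) : P \in pairs A -> P \subset A.
Proof. by rewrite inE => /andP[]. Qed.

Lemma pairs_disjoint (P Q : {set T}) : #|P| = 2 -> #|Q| = 2 ->
  wsum P = wsum Q -> P != Q -> [disjoint P & Q].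
Proof.
move=> cP cQ sPQ nPQ; rewrite -setI_eq0; apply/eqP/setP => x; rewrite !inE.
apply/negbTE/negP => /andP[xP xQ].
have [u ux eP] := pair_with cP xP; have [v vx eQ] := pair_with cQ xQ.
move: sPQ; rewrite eP eQ !wsum2 1?eq_sym // => /addrI/f_inj uv.
by move: nPQ; rewrite eP eQ uv eqxx.
Qed.

Lemma rest1 (A Q : {set T}) : Q \subset A -> #|A| = (#|Q| + 1) ->
  exists2 t, t \in A :\: Q & wsum A = (f t + wsum Q)%R.
Proof.
move=> QA cA; have : #|A :\: Q| == 1 by rewrite cardsDs // cA addnC addnK.
case/cards1P=> t et; exists t; first by rewrite et set11.
by have := wsumD QA; rewrite et wsum1 => ->; rewrite -addrA char2 addr0.
Qed.

Lemma rest2 (A Q : {set T}) : Q \subset A -> #|A| = (#|Q| + 2) ->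
  exists r1 r2, [/\ r1 != r2, r1 \in A :\: Q, r2 \in A :\: Q &
     wsum A = (f r1 + f r2 + wsum Q)%R].
Proof.
move=> QA cA; have : #|A :\: Q| == 2 by rewrite cardsDs // cA addnC addnK.
case/cards2P=> r1 [r2 [r12 et]]; exists r1, r2; split => //.
- by rewrite et !inE eqxx.
- by rewrite et !inE eqxx orbT.
by have := wsumD QA; rewrite et wsum2 // => ->; rewrite -addrA char2 addr0.
Qed.

(* Blocks inside a (k+4)-set y correspond, by complementation, to the k-subsets
   of y having the same weight as y. *)
Lemma nblk_compl (y : {set T}) k : #|y| = (k + 4) ->
  nblk y = #|[set P : {set T} | [&& P \subset y, #|P| == k & wsum P == wsum y]]|.
Proof.
move=> cy; set D := [set B : {set T} | is_block B && (B \subset y)].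
have inj : {in D &, injective (fun B => y :\: B)}.
  move=> B1 B2; rewrite !inE => /andP[_ s1] /andP[_ s2] e.
  by rewrite -(setDDK s1) -(setDDK s2) e.
rewrite /nblk -/D -(card_in_imset inj); apply: eq_card => P; rewrite !inE.
apply/imsetP/idP.
- case=> B; rewrite inE /is_block => /andP[/andP[cB sB] By] ->.
  by rewrite subsetDl cardsDs // cy (eqP cB) addnK wsumD // (eqP sB) addr0 !eqxx.
- case/and3P=> Py cP sP; exists (y :\: P); last by rewrite setDDK.
  rewrite inE /is_block subsetDl cardsDs // cy (eqP cP) addKn /= andbT wsumD //.
  by rewrite (eqP sP) char2.
Qed.

Lemma nblk_six (y : {set T}) : #|y| = 6 -> nblk y = npairs y (wsum y).
Proof.
by move=> cy; rewrite (nblk_compl (k := 2)) //; apply: eq_card => P; rewrite !inE andbA.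
Qed.

(* A 5-set contains at most one block, namely the complement of its deficit. *)
Lemma nblk_five (S : {set T}) : #|S| = 5 -> nblk S = (deficit S \in S).
Proof.
move=> cS; rewrite (nblk_compl (k := 1)) //.
transitivity #|[set P : {set T} | (P == [set deficit S]) && (P \subset S)]|.
  apply: eq_card => P; rewrite !inE andbC; congr (_ && _).
  apply/andP/eqP => [[/cards1P[x ->] /eqP]|->]; last by rewrite cards1 wsum1 hK.
  by rewrite wsum1 /deficit => <-; rewrite fK.
case: (boolP (deficit S \in S)) => dS.
  by apply/eqP/cards1P; exists [set deficit S]; apply/setP => P; rewrite !inE;
    case: eqP => // ->; rewrite sub1set dS.
by apply: eq_card0 => P; rewrite !inE; case: eqP => // ->; rewrite sub1set (negbTE dS).
Qed.

Lemma pair_of_weight (P : {set T}) b w : #|P| = 2 -> wsum P = w -> b \in P ->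
  P = [set b; h (w + f b)%R].
Proof.
move=> cP sP bP; have [u ub eP] := pair_with cP bP.
move: sP; rewrite eP wsum2 1?eq_sym // => sP.
by rewrite -sP addrC char2_addKr fK.
Qed.

(* Pairs of b |: S of weight w: those of S, plus possibly {b, h (w + f b)}. *)
Lemma npairsU1 (S : {set T}) b w : b \notin S ->
  npairs (b |: S) w = (npairs S w + (h (w + f b)%R \in S)).
Proof.
move=> bS; rewrite /npairs -(cardsID [set P : {set T} | b \in P]) addnC.
set c := h (w + f b)%R.
have fc : f c = (w + f b)%R by rewrite /c hK.
congr (_ + _).
  apply: eq_card => P; rewrite !inE.
  apply/idP/idP => [/and3P[bP /andP[PS cP] sP]|/andP[/andP[PS cP] sP]].
    rewrite cP sP !andbT; apply/subsetP => x xP.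
    have := subsetP PS x xP; rewrite !inE => /orP[/eqP xb|] //.
    by rewrite -xb xP in bP.
  apply/and3P; split => //; first by apply: contra bS; apply: (subsetP PS).
  by rewrite cP (subset_trans PS) ?subsetUr.
case cS: (c \in S).
  rewrite /= -(cards1 [set b; c]); apply: eq_card => P; rewrite !inE.
  apply/idP/idP => [/andP[/andP[/andP[_ /eqP cP] /eqP sP] bP]|/eqP->].
    by rewrite (pair_of_weight cP sP bP).
  have cb : b != c by apply: contraNneq bS => ->.
  rewrite wsum2 // fc addrC -addrA char2 addr0 eqxx !inE eqxx cards2 cb /= !andbT.
  by apply/subsetP => x; rewrite !inE => /orP[]/eqP->; rewrite ?eqxx ?cS ?orbT.
apply: eq_card0 => P; rewrite !inE; apply/negP.
case/andP=> /andP[/andP[PS /eqP cP] /eqP sP] bP.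
have eP := pair_of_weight cP sP bP.
have bc : b != c by move: cP; rewrite eP cards2; case: (b != c).
move: PS; rewrite eP => /subsetP/(_ c).
by rewrite !inE eqxx orbT eq_sym (negbTE bc) cS => /(_ isT).
Qed.

(* Blocks of a 6-set b |: S: those of S, plus those through b. *)
Lemma nblk_add_point (S : {set T}) b : #|S| = 5 -> b \notin S ->
  nblk (b |: S) = (nblk S + npairs S (wsum S + f b)%R).
Proof.
move=> cS bS; rewrite nblk_six; last by rewrite cardsU1 bS cS.
by rewrite wsumU1 // npairsU1 // nblk_five // addnC (addrC (f b)) -addrA char2 addr0.
Qed.

Section BlockFreeFiveSet.
Variable S : {set T}.
Hypotheses (cS : #|S| = 5) (nS : deficit S \notin S).

(* Two distinct pairs of equal weight would form a block of S. *)
Lemma free_pairs_inj (P Q : {set T}) : P \in pairs S -> Q \in pairs S ->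
  wsum P = wsum Q -> P = Q.
Proof.
move=> pP pQ e; apply/eqP; apply: contraT => nPQ.
have dj := pairs_disjoint (pairs_card pP) (pairs_card pQ) e nPQ.
have sPQ : P :|: Q \subset S by rewrite subUset (pairs_sub pP) (pairs_sub pQ).
have cPQ : #|P :|: Q| = 4.
  by rewrite cardsU (disjoint_setI0 dj) cards0 (pairs_card pP) (pairs_card pQ).
have [t tS st] := rest1 sPQ (etrans cS (congr1 (addn^~ 1) (esym cPQ))).
move: st; rewrite wsumU // e char2 addr0 => st.
by move: nS; rewrite /deficit st fK; move: tS; rewrite inE => /andP[_ ->].
Qed.

(* If h (wsum S + wsum P) were in S, S would contain a block. *)
Lemma free_shift_out (P : {set T}) : P \in pairs S -> h (wsum S + wsum P)%R \notin S.
Proof.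
move=> pP; apply/negP => sS.
set s := h _ in sS; have fs : f s = (wsum S + wsum P)%R by rewrite /s hK.
case sP: (s \in P).
  have [v vs eP] := pair_with (pairs_card pP) sP.
  move: fs; rewrite eP wsum2 1?eq_sym // => /char2_cancel e.
  move: nS; rewrite /deficit e fK; apply/negP/negPn.
  by apply: (subsetP (pairs_sub pP)); rewrite eP !inE eqxx orbT.
have sub : s |: P \subset S by rewrite subUset sub1set sS (pairs_sub pP).
have c3 : #|S| = (#|s |: P| + 2) by rewrite cardsU1 sP (pairs_card pP) cS.
have [r1 [r2 [r12 _ _ e]]] := rest2 sub c3.
move: e; rewrite wsumU1 ?sP // fs -[(wsum S + wsum P + wsum P)%R]addrA char2 addr0.
rewrite -{1}(add0r (wsum S)) => /addIr/esym/eqP.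
by apply/negP; exact: fsum_neq0 r12.
Qed.

Lemma free_npairs_le1 b : npairs S (wsum S + f b)%R <= 1.
Proof.
apply/card_le1_eqP => P Q; rewrite inE => /andP[pP eP]; rewrite inE => /andP[pQ eQ].
by apply: free_pairs_inj => //; rewrite (eqP eP) (eqP eQ).
Qed.

(* The map P |-> h (wsum S + wsum P)%R is a bijection from the 10 pairs of S
   onto the outside points b for which b |: S has a block through b. *)
Lemma free_npairs_eq1 :
  #|[set b | (b \notin S) && (npairs S (wsum S + f b)%R == 1)]| = 10.
Proof.
pose F P := h (wsum S + wsum P)%R.
have injF : {in pairs S &, injective F}.
  move=> P Q pP pQ /(congr1 f); rewrite /F !hK => /addrI; exact: free_pairs_inj.
have -> : 10 = #|pairs S| by rewrite /pairs cards_draws cS.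
rewrite -(card_in_imset injF); apply: eq_card => b; rewrite inE.
apply/andP/imsetP => [[bS /cards1P[P eP]]|[P pP ->]].
  have : P \in [set P in pairs S | wsum P == wsum S + f b]%R by rewrite eP set11.
  by rewrite inE shift_eq => /andP[pP /eqP <-]; exists P.
split; first exact: free_shift_out.
rewrite eqn_leq free_npairs_le1 /=; apply/card_gt0P; exists P.
by rewrite inE pP /= shift_eq.
Qed.
End BlockFreeFiveSet.

(* A 5-set S containing the block B0 = S :\ deficit S: the six pairs of B0
   split into three couples of complementary pairs with equal weight, each
   couple yielding one outside point. *)
Section OneBlockFiveSet.
Variable S : {set T}.
Hypotheses (cS : #|S| = 5) (dS : deficit S \in S).
Let d := deficit S.
Let B0 := S :\ d.
Let fd : f d = wsum S. Proof. by rewrite /d hK. Qed.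
Let cB0 : #|B0| = 4. Proof. by rewrite /B0 cardsDs ?sub1set // cS cards1. Qed.
Let sB0 : wsum B0 = 0%R. Proof. by rewrite /B0 wsumD1 // fd char2. Qed.
Let dB0 : d \notin B0. Proof. by rewrite /B0 !inE eqxx. Qed.
Let B0S : B0 \subset S. Proof. exact: subsetDl. Qed.

(* For b outside S, no pair of weight wsum S + f b contains the deficit. *)
Lemma block_npairs b : b \notin S ->
  npairs S (wsum S + f b)%R = npairs B0 (wsum S + f b)%R.
Proof.
move=> bS; rewrite /npairs; apply: eq_card => P; rewrite !inE.
case eP: (wsum P == wsum S + f b)%R; rewrite ?andbF ?andbT //.
apply/andP/andP => [[PS cP]|[PB cP]]; split => //; last exact: subset_trans B0S.
apply/subsetP => x xP; rewrite !inE (subsetP PS) // andbT.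
apply: contraNneq bS => xd; move: xP; rewrite xd => dP.
have [u ud eP'] := pair_with (eqP cP) dP.
move: eP; rewrite eP' wsum2 1?eq_sym // -fd => /eqP/addrI/f_inj ->.
by apply: (subsetP PS); rewrite eP' !inE eqxx orbT.
Qed.

(* A pair P of the block B0 shares its weight only with B0 :\: P. *)
Lemma block_pair_mates P : P \in pairs B0 ->
  #|[set Q in pairs B0 | wsum Q == wsum P]| = 2.
Proof.
move=> pP; have PB := pairs_sub pP; have cP := pairs_card pP.
have cD : #|B0 :\: P| = 2 by rewrite cardsDs // cB0 cP.
have nP : P != B0 :\: P.
  apply: contraTneq isT => eP.
  have : P :&: P = set0.
    by rewrite {2}eP; apply/setP => x; rewrite !inE; case: (x \in P); rewrite ?andbF.
  by rewrite setIid => P0; move: cP; rewrite P0 cards0.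
have c2 : #|[set P; B0 :\: P]| = 2 by rewrite cards2 nP.
rewrite -c2.
apply: eq_card => Q; rewrite !inE; apply/idP/idP.
  case/andP=> /andP[QB cQ] sQ; case: (eqVneq Q P) => [->|nQP]; first by [].
  have dj := pairs_disjoint (eqP cQ) cP (eqP sQ) nQP.
  have sub : Q \subset B0 :\: P by apply/subsetDP.
  by have -> : Q == B0 :\: P by rewrite eqEcard sub cD (eqP cQ).
case/orP=> /eqP ->; first by rewrite PB cP !eqxx.
by rewrite subsetDl cD wsumD // sB0 add0r !eqxx.
Qed.

Let F P := h (wsum S + wsum P)%R.

Lemma block_shift_out P : P \in pairs B0 -> F P \notin S.
Proof.
move=> pP; apply/negP => sS.
set s := F P in sS; have fs : f s = (f d + wsum P)%R by rewrite /s /F hK fd.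
case: (eqVneq s d) => [sd|nsd].
  move: fs; rewrite sd -{1}(addr0 (f d)) => /addrI/esym.
  have [u [v [uv eP]]] := cards2P _ (introT eqP (pairs_card pP)).
  by rewrite eP wsum2 //; apply/eqP/fsum_neq0.
have sB : s \in B0 by rewrite /B0 !inE nsd.
case sP: (s \in P).
  have [v vs eP] := pair_with (pairs_card pP) sP.
  move: fs; rewrite eP wsum2 1?eq_sym // => /char2_cancel/f_inj dv.
  by move: dB0; rewrite dv (subsetP (pairs_sub pP)) // eP !inE eqxx orbT.
have sub : s |: P \subset B0 by rewrite subUset sub1set sB (pairs_sub pP).
have c3 : #|B0| = (#|s |: P| + 1) by rewrite cardsU1 sP (pairs_card pP) cB0.
have [t tB e] := rest1 sub c3.
move: e; rewrite wsumU1 ?sP // fs sB0 -[(f d + wsum P + wsum P)%R]addrA char2 addr0.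
by move/esym/char2_eq/f_inj => td; move: tB; rewrite td !inE eqxx /= andbF.
Qed.

Lemma block_npairsE b : b \notin S ->
  npairs S (wsum S + f b)%R = if b \in F @: pairs B0 then 2 else 0.
Proof.
move=> bS; rewrite block_npairs // /npairs.
case: imsetP => [[P pP ->]|nb].
  rewrite -(block_pair_mates pP); apply: eq_card => Q.
  by rewrite !inE /F hK char2_addKr.
apply: eq_card0 => Q; rewrite !inE; apply/negP => /andP[pQ eQ].
apply: nb; exists Q; first by rewrite inE.
by rewrite /F (eqP eQ) char2_addKr fK.
Qed.

Lemma block_shift_card : #|F @: pairs B0| = 3.
Proof.
have : #|pairs B0| = 6 by rewrite /pairs cards_draws cB0.
rewrite -sum1_card (partition_big_imset F) /=.
rewrite (eq_bigr (fun _ => 2)) ?sum_nat_const.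
  by move/eqP; lia.
move=> j /imsetP[P pP ->].
rewrite sum1dep_card -(block_pair_mates pP); apply: eq_card => Q; rewrite !inE.
congr (_ && _); apply/eqP/eqP => [/(congr1 f)|e]; last by rewrite /F e.
by rewrite /F !hK => /addrI.
Qed.
End OneBlockFiveSet.

Lemma nblk_five_cases (S : {set T}) : #|S| = 5 ->
  (nblk S = 0 <-> deficit S \notin S) /\ (nblk S = 1 <-> deficit S \in S).
Proof. by move=> cS; rewrite nblk_five //; case: (deficit S \in S). Qed.

Definition ext_count (S : {set T}) k :=
  #|[set b | (b \notin S) && (nblk (b |: S) == k)]|.

Lemma ext_count_split (S : {set T}) k k' : k != k' ->
  (forall b, b \notin S -> (nblk (b |: S) == k) || (nblk (b |: S) == k')) ->
  (ext_count S k + ext_count S k' = #|T| - #|S|).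
Proof.
move=> kk' two; have -> : (#|T| - #|S| = #|[set b | b \notin S]|).
  by rewrite -(cardsC S) addKn; apply: eq_card => b; rewrite !inE.
rewrite -(card_split [set b | b \notin S] (fun b => nblk (b |: S) == k)).
congr (_ + _); apply: eq_card => b; rewrite !inE //.
case: (boolP (b \in S)) => //= bS.
by case/orP: (two b bS) => /eqP->; rewrite ?eqxx ?(negbTE kk') // eq_sym kk'.
Qed.

Lemma ext_count0 (S : {set T}) k :
  (forall b, b \notin S -> nblk (b |: S) != k) -> ext_count S k = 0.
Proof.
move=> nk; apply: eq_card0 => b; rewrite !inE.
by case: (boolP (b \in S)) => //= /nk /negbTE.
Qed.

Lemma free_ext_counts (S : {set T}) : #|S| = 5 -> nblk S = 0 ->
  [/\ forall b, b \notin S -> nblk (b |: S) <= 1,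
      ext_count S 1 = 10, (ext_count S 0 + 10 = #|T| - 5) & ext_count S 3 = 0].
Proof.
move=> cS nS; have dS : deficit S \notin S by apply/(nblk_five_cases cS).1.
have ext b : b \notin S -> nblk (b |: S) = npairs S (wsum S + f b)%R.
  by move=> bS; rewrite nblk_add_point // nS.
have le1 b : b \notin S -> nblk (b |: S) <= 1.
  by move=> bS; rewrite ext // free_npairs_le1.
have c1 : ext_count S 1 = 10.
  rewrite -(free_npairs_eq1 cS dS); apply: eq_card => b; rewrite !inE.
  by case: (boolP (b \in S)) => //= bS; rewrite ext.
split => //.
- rewrite -c1 addnC -cS ext_count_split // => b /le1.
  by case: (nblk _) => [|[]].
- by apply: ext_count0 => b /le1; case: (nblk _) => [|[|[]]].
Qed.

Lemma block_ext_counts (S : {set T}) : #|S| = 5 -> nblk S = 1 ->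
  [/\ forall b, b \notin S -> (nblk (b |: S) == 1) || (nblk (b |: S) == 3),
      ext_count S 3 = 3, (ext_count S 1 + 3 = #|T| - 5) & ext_count S 0 = 0].
Proof.
move=> cS nS; have dS : deficit S \in S by apply/(nblk_five_cases cS).2.
set I := (fun P => h (wsum S + wsum P)%R) @: pairs (S :\ deficit S).
have ext b : b \notin S -> nblk (b |: S) = if b \in I then 3 else 1.
  by move=> bS; rewrite nblk_add_point // nS block_npairsE //; case: ifP.
have one_or_three b : b \notin S -> (nblk (b |: S) == 1) || (nblk (b |: S) == 3).
  by move=> bS; rewrite ext //; case: ifP.
have c3 : ext_count S 3 = 3.
  transitivity #|I|; last exact: block_shift_card.
  apply: eq_card => b; rewrite inE.
  case: (boolP (b \in S)) => [bS|/ext->]; last by case: ifP.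
  by apply/esym/imsetP => -[P pP eb]; move: (block_shift_out cS dS pP); rewrite -eb bS.
split => //.
- by rewrite -cS -c3 ext_count_split.
- by apply: ext_count0 => b /ext->; case: ifP.
Qed.

(* Counting the neighbours of a 6-set x in J(T,6) by their number of blocks:
   a neighbour is b |: (x :\ a) with a in x and b outside x. *)
Definition swap_count (x : {set T}) a k :=
  #|[set b | (b \notin x) && (nblk (b |: (x :\ a)) == k)]|.

Definition nbr_count (x : {set T}) k := (\sum_(a in x) swap_count x a k).

(* The extensions of x :\ a are the swaps at a, together with x itself. *)
Lemma swap_countE (x : {set T}) a k : a \in x ->
  (swap_count x a k + (nblk x == k) = ext_count (x :\ a) k).
Proof.
move=> ax; rewrite /ext_count (cardsD1 a) addnC; congr (_ + _).
  by rewrite !inE eqxx /= setD1K.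
apply: eq_card => b; rewrite !inE.
by case: (eqVneq b a) => [->|ba] /=; first by rewrite ax.
Qed.

Section SixSet.
Variable x : {set T}.
Hypothesis cx : #|x| = 6.

Lemma card_del a : a \in x -> #|x :\ a| = 5.
Proof. by move=> ax; move: cx; rewrite (cardsD1 a) ax => -[]. Qed.

Lemma nblk_del_le1 a : a \in x -> nblk (x :\ a) <= 1.
Proof. by move=> ax; rewrite nblk_five ?card_del //; case: (_ \in _). Qed.

Lemma swap_free a : a \in x -> nblk (x :\ a) = 0 ->
  [/\ nblk x <= 1, (swap_count x a 1 + (nblk x == 1) = 10),
      (swap_count x a 0 + (nblk x == 0) + 10 = #|T| - 5) & swap_count x a 3 = 0].
Proof.
move=> ax n0; have [le1 e1 e0 e3] := free_ext_counts (card_del ax) n0.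
rewrite !swap_countE // e1 e0; split => //.
  by rewrite -{1}(setD1K ax) le1 // !inE eqxx.
by move: e3; rewrite -swap_countE // => /eqP; rewrite addn_eq0 => /andP[/eqP].
Qed.

Lemma swap_block a : a \in x -> nblk (x :\ a) = 1 ->
  [/\ (nblk x == 1) || (nblk x == 3), (swap_count x a 3 + (nblk x == 3) = 3),
      (swap_count x a 1 + (nblk x == 1) + 3 = #|T| - 5) & swap_count x a 0 = 0].
Proof.
move=> ax n1; have [two e3 e1 e0] := block_ext_counts (card_del ax) n1.
rewrite !swap_countE // e3 e1; split => //.
  by rewrite -(setD1K ax); apply: two; rewrite !inE eqxx.
by move: e0; rewrite -swap_countE // => /eqP; rewrite addn_eq0 => /andP[/eqP].
Qed.

Lemma nblk_six_cases : [|| nblk x == 0, nblk x == 1 | nblk x == 3].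
Proof.
have /card_gt0P[a ax] : 0 < #|x| by rewrite cx.
case n: (nblk (x :\ a)) (nblk_del_le1 ax) => [|[|//]] _.
  by have [] := swap_free ax n; case: (nblk x) => [|[]].
by have [/orP[]->] := swap_block ax n; rewrite ?orbT.
Qed.

(* If x contains a single block B, removing a point leaves a block exactly
   when the point lies outside B: this happens for 6 - 4 = 2 points. *)
Lemma one_block_deletions : nblk x = 1 ->
  #|[set a in x | nblk (x :\ a) == 1]| = 2.
Proof.
move/eqP/cards1P => [B eB].
have : B \in [set B | is_block B && (B \subset x)] by rewrite eB set11.
rewrite inE => /andP[/andP[/eqP cB _] Bx].
have del a : nblk (x :\ a) = (a \notin B).
  rewrite /nblk (_ : [set _ | _] = [set B' in [set B] | a \notin B']); last first.
    by rewrite -eB; apply/setP => B'; rewrite !inE subsetD1 andbA.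
  case: (boolP (a \in B)) => aB /=.
    by apply: eq_card0 => B'; rewrite !inE; case: eqP => // ->; rewrite aB.
  by apply/eqP/cards1P; exists B; apply/setP => B'; rewrite !inE; case: eqP => // ->.
rewrite -(_ : #|x :\: B| = 2); last by rewrite cardsDs // cx cB.
by apply: eq_card => a; rewrite !inE del andbC; case: (a \in B).
Qed.

Lemma nbr_counts_free : nblk x = 0 ->
  [/\ nbr_count x 0 = 6 * (#|T| - 16), nbr_count x 1 = 60 & nbr_count x 3 = 0].
Proof.
move=> n0; have free a : a \in x -> nblk (x :\ a) = 0.
  move=> ax; case n: (nblk (x :\ a)) (nblk_del_le1 ax) => [|[|//]] // _.
  by have [] := swap_block ax n; rewrite n0.
rewrite /nbr_count; split.
- rewrite (eq_bigr (fun _ => #|T| - 16)) ?sum_nat_const ?cx // => a ax.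
  by have [_ _ + _] := swap_free ax (free a ax); rewrite n0 /=; lia.
- rewrite (eq_bigr (fun _ => 10)) ?sum_nat_const ?cx // => a ax.
  by have [_ + _ _] := swap_free ax (free a ax); rewrite n0 /=; lia.
- rewrite (eq_bigr (fun _ => 0)) ?sum_nat_const ?cx // => a ax.
  by have [] := swap_free ax (free a ax).
Qed.

Lemma nbr_counts_three : nblk x = 3 ->
  [/\ nbr_count x 0 = 0, nbr_count x 1 = 6 * (#|T| - 8) & nbr_count x 3 = 12].
Proof.
move=> n3; have block a : a \in x -> nblk (x :\ a) = 1.
  move=> ax; case n: (nblk (x :\ a)) (nblk_del_le1 ax) => [|[|//]] // _.
  by have [] := swap_free ax n; rewrite n3.
rewrite /nbr_count; split.
- rewrite (eq_bigr (fun _ => 0)) ?sum_nat_const ?cx // => a ax.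
  by have [] := swap_block ax (block a ax).
- rewrite (eq_bigr (fun _ => #|T| - 8)) ?sum_nat_const ?cx // => a ax.
  by have [_ _ + _] := swap_block ax (block a ax); rewrite n3 /=; lia.
- rewrite (eq_bigr (fun _ => 2)) ?sum_nat_const ?cx // => a ax.
  by have [_ + _ _] := swap_block ax (block a ax); rewrite n3 /=; lia.
Qed.

(* Two points of x lie outside its block (deletion leaves a block), four lie
   on it (deletion leaves no block). *)
Lemma nbr_counts_one : 16 <= #|T| -> nblk x = 1 ->
  [/\ nbr_count x 0 = 4 * (#|T| - 15), nbr_count x 1 = 2 * (#|T| - 9) + 36
    & nbr_count x 3 = 6].
Proof.
move=> large n1; set p := fun a => nblk (x :\ a) == 1.
have c1 : #|[set a in x | p a]| = 2 by apply: one_block_deletions.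
have c0 : #|[set a in x | ~~ p a]| = 4 by have := card_split x p; rewrite c1 cx; lia.
have off a : a \in x -> ~~ p a -> nblk (x :\ a) = 0.
  by move=> ax; rewrite /p; case: (nblk _) (nblk_del_le1 ax) => [|[]].
rewrite /nbr_count; split.
- rewrite (sum_two_values (p := p) (c1 := 0) (c0 := #|T| - 15)) ?c1 ?c0; first lia.
  move=> a ax; case: ifP => [/eqP pa|/negbT pa]; first by have [] := swap_block ax pa.
  by have [_ _ + _] := swap_free ax (off a ax pa); rewrite n1 /=; lia.
- rewrite (sum_two_values (p := p) (c1 := #|T| - 9) (c0 := 9)) ?c1 ?c0; first lia.
  move=> a ax; case: ifP => [/eqP pa|/negbT pa].
    by have [_ _ + _] := swap_block ax pa; rewrite n1 /=; lia.
  by have [_ + _ _] := swap_free ax (off a ax pa); rewrite n1 /=; lia.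
- rewrite (sum_two_values (p := p) (c1 := 3) (c0 := 0)) ?c1 ?c0; first lia.
  move=> a ax; case: ifP => [/eqP pa|/negbT pa].
    by have [_ + _ _] := swap_block ax pa; rewrite n1 /=; lia.
  by have [] := swap_free ax (off a ax pa).
Qed.
End SixSet.
End Char2Weights.

Section ThreeClasses.
Variables (V : finType) (e : rel V) (A0 A1 A2 : {set V}).
Hypotheses (cover : forall v, [|| v \in A0, v \in A1 | v \in A2])
  (disj01 : [disjoint A0 & A1]) (disj02 : [disjoint A0 & A2])
  (disj12 : [disjoint A1 & A2])
  (no_edge02 : forall u v, u \in A0 -> v \in A2 -> ~~ e u v)
  (down1 : forall v, v \in A1 -> exists2 u, u \in A0 & e u v)
  (down2 : forall v, v \in A2 -> exists2 u, u \in A1 & e u v).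

Lemma reach_step (C : {set V}) d u v : u \in reach e C d -> e u v ->
  v \in reach e C d.+1.
Proof. by move=> uC uv; rewrite inE; apply/existsP; exists u; rewrite uC. Qed.

Lemma reach1_sub v : v \in reach e A0 1 -> (v \in A0) || (v \in A1).
Proof.
rewrite inE => /existsP[u /andP[uA0 uv]].
case/or3P: (cover v) => [->|->|vA2] //; first by rewrite orbT.
by rewrite (negbTE (no_edge02 uA0 vA2)) in uv.
Qed.

Lemma A1_reach1 v : v \in A1 -> v \in reach e A0 1.
Proof. by case/down1 => u uA0 uv; apply: reach_step uv. Qed.

Lemma A2_reach2 v : v \in A2 -> v \in reach e A0 2.
Proof. by case/down2 => u /A1_reach1 uR uv; apply: reach_step uv. Qed.

Lemma A2_notin_reach1 v : v \in A2 -> v \notin reach e A0 1.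
Proof.
move=> vA2; apply/negP => /reach1_sub.
by rewrite (disjointFl disj02 vA2) (disjointFl disj12 vA2).
Qed.

Lemma three_class_layers :
  [/\ layer e A0 0 = A0, layer e A0 1 = A1, layer e A0 2 = A2
    & forall i, 2 < i -> layer e A0 i = set0].
Proof.
split.
- by rewrite /layer big_ord0 setD0.
- apply/setP => v; rewrite /layer big_ord1 inE.
  apply/andP/idP => [[vA0 /reach1_sub]|vA1]; first by rewrite (negbTE vA0).
  by rewrite A1_reach1 //= (disjointFl disj01 vA1).
- apply/setP => v; rewrite /layer big_ord_recr big_ord1 /= in_setD in_setU.
  rewrite negb_or; apply/andP/idP => [[/andP[vA0 vR1] _]|vA2].
    case/or3P: (cover v) => [vA0'|/A1_reach1 vR1'|//].
      by rewrite vA0' in vA0.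
    by rewrite vR1' in vR1.
  by rewrite A2_reach2 // (disjointFl disj02 vA2); split => //; apply: A2_notin_reach1.
- move=> i i2; apply/setP => v; rewrite /layer !inE; apply/negbTE.
  rewrite negb_and negbK; apply/orP; left; apply/bigcupP.
  case/or3P: (cover v) => vA.
  + by exists (Ordinal (ltn_trans (isT : 0 < 2) i2)).
  + by exists (Ordinal (ltn_trans (isT : 1 < 2) i2)) => //; apply: A1_reach1.
  + by exists (Ordinal i2) => //; apply: A2_reach2.
Qed.

Lemma three_class_radius : A2 != set0 -> covering_radius e A0 2.
Proof. by move=> A2n0; have [_ _ L2 L3] := three_class_layers; split; rewrite ?L2. Qed.

Lemma three_class_regular (g1 g2 a0 a1 a2 b0 b1 : nat) : A0 != set0 ->
  (forall v, v \in A0 -> nbrs_in e v A0 = a0 /\ nbrs_in e v A1 = b0) ->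
  (forall v, v \in A1 ->
     [/\ nbrs_in e v A0 = g1, nbrs_in e v A1 = a1 & nbrs_in e v A2 = b1]) ->
  (forall v, v \in A2 -> nbrs_in e v A1 = g2 /\ nbrs_in e v A2 = a2) ->
  completely_regular e A0.
Proof.
move=> A0n0 N0 N1 N2; have [L0 L1 L2 L3] := three_class_layers.
have nbrs0 v : nbrs_in e v set0 = 0 by apply: eq_card0 => w; rewrite !inE.
split => //.
exists (nth 0 [:: 0; g1; g2]), (nth 0 [:: a0; a1; a2]), (nth 0 [:: b0; b1]).
case=> [|[|[|i]]] v /=.
- by rewrite L0 L1 nbrs0 => /N0[-> ->].
- by rewrite L0 L1 L2 => /N1[-> -> ->].
- by rewrite L1 L2 L3 // nbrs0 => /N2[-> ->].
- by rewrite L3 // inE.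
Qed.
End ThreeClasses.

Section Swaps.
Variables (T : finType) (X : {set T}).

Definition swap (p : T * T) := p.2 |: (X :\ p.1).
Definition swap_dom := [set p : T * T | (p.1 \in X) && (p.2 \notin X)].

Lemma swap_meet p : p \in swap_dom -> X :&: swap p = X :\ p.1.
Proof.
rewrite inE => /andP[_ bX]; apply/setP => z; rewrite !inE.
case: eqP => [->|_]; rewrite ?(negbTE bX) ?andbF //=.
by case: (z \in X); rewrite ?andbT ?andbF.
Qed.

Lemma swap_card p : p \in swap_dom -> #|swap p| = #|X|.
Proof.
rewrite inE => /andP[aX bX].
by rewrite cardsU1 !inE (negbTE bX) andbF /= (cardsD1 p.1 X) aX.
Qed.

Lemma swap_inj : {in swap_dom &, injective swap}.
Proof.
move=> [a b] [a' b'] pD pD' e.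
have eX : X :\ a = X :\ a' by rewrite -(swap_meet pD) e swap_meet.
move: pD pD'; rewrite !inE /= => /andP[aX bX] /andP[a'X _].
have bb : b = b'.
  have : b \in b' |: (X :\ a') by rewrite -[b' |: _]e setU11.
  by rewrite !inE (negbTE bX) andbF orbF => /eqP.
have aa : a = a'.
  apply/eqP; apply: contraT => aa'.
  have : a \in X :\ a' by rewrite !inE aa' aX.
  by rewrite -eX !inE eqxx.
by rewrite aa bb.
Qed.

Lemma swap_onto k (W : {set T}) : #|X| = k.+1 -> #|W| = k.+1 -> #|X :&: W| = k ->
  exists2 p, p \in swap_dom & W = swap p.
Proof.
move=> cX cW cI.
have /cards1P[a ea] : #|X :\: W| == 1 by rewrite cardsD cI cX subSnn.
have /cards1P[b eb] : #|W :\: X| == 1 by rewrite cardsD setIC cI cW subSnn.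
have /setDP[aX _] : a \in X :\: W by rewrite ea set11.
have /setDP[_ bX] : b \in W :\: X by rewrite eb set11.
have eI : X :&: W = X :\ a by rewrite -ea setDDr setDv set0U.
exists (a, b); first by rewrite inE aX bX.
by rewrite /swap -(setID W X) setIC eI eb setUC.
Qed.
End Swaps.

(* In the Johnson graph J(T, k+1), the neighbours of x are the swaps of x,
   each obtained exactly once; hence the neighbours satisfying Q can be
   counted point by point. *)
Lemma johnson_nbrs_count (T : finType) k (x : {S : {set T} | #|S| == k.+1})
    (Q : pred {set T}) :
  #|[set w : {S : {set T} | #|S| == k.+1} | Q (val w) && (#|val x :&: val w| == k)]| =
  \sum_(a in val x) #|[set b | (b \notin val x) && Q (b |: (val x :\ a))]|.
Proof.
set X := val x; have cX : #|X| = k.+1 by apply/eqP; exact: (valP x).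
set D := [set p in swap_dom X | Q (swap X p)].
have -> : \sum_(a in X) #|[set b | (b \notin X) && Q (b |: (X :\ a))]| = #|D|.
  under eq_bigr => a _ do rewrite -sum1dep_card.
  rewrite pair_big_dep sum1dep_card; apply: eq_card => p.
  by rewrite !inE andbA.
have injD : {in D &, injective (swap X)}.
  by move=> p q /setIdP[pD _] /setIdP[qD _]; apply: swap_inj.
rewrite -(card_in_imset injD) -(card_imset _ val_inj).
apply: eq_card => Y; apply/imsetP/imsetP.
- case=> w; rewrite inE => /andP[QY cI] ->.
  have cW : #|val w| = k.+1 by apply/eqP; exact: (valP w).
  have [p pD eW] := swap_onto cX cW (eqP cI).
  by exists p; rewrite // inE pD -eW.
- case=> p; rewrite inE => /andP[pD QY] ->.
  have cP : #|swap X p| == k.+1 by rewrite swap_card // cX.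
  exists (exist (fun S : {set T} => #|S| == k.+1) (swap X p) cP) => //.
  rewrite inE /= QY swap_meet //.
  by move: pD cX; rewrite inE => /andP[p1X _]; rewrite (cardsD1 p.1 X) p1X => -[/eqP].
Qed.

(* The Hamming columns: coordinate i < 2^m - 1 gets the binary expansion of
   i + 1 (the parity-check column of the Hamming code), the parity coordinate
   2^m - 1 gets 0; these are exactly the 2^m vectors of F_2^m. *)
Lemma odd_div_mod x m k : k < m -> odd (x %/ 2 ^ k) = odd ((x %% 2 ^ m) %/ 2 ^ k).
Proof.
move=> km; rewrite {1}(divn_eq x (2 ^ m)).
have -> : 2 ^ m = 2 ^ (m - k) * 2 ^ k by rewrite -expnD subnK // ltnW.
rewrite mulnA divnMDl ?expn_gt0 // oddD oddM oddX.
have -> : (m - k == 0) = false by apply/negbTE; rewrite subn_eq0 -ltnNge.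
by rewrite andbF.
Qed.

Lemma bits_inj m x y : x < 2 ^ m -> y < 2 ^ m ->
  (forall k, k < m -> odd (x %/ 2 ^ k) = odd (y %/ 2 ^ k)) -> x = y.
Proof.
elim: m x y => [|m IH] x y; first by rewrite expn0 !ltnS !leqn0 => /eqP-> /eqP->.
move=> xm ym e; rewrite (divn_eq x 2) (divn_eq y 2) !modn2.
have e0 := e 0 isT; rewrite !expn0 !divn1 in e0; rewrite e0.
congr (_ * _ + _); apply: IH; rewrite ?ltn_divLR // -?expnSr //.
by move=> k km; have := e k.+1 km; rewrite expnS !divnMA.
Qed.

Lemma Z2_nat (b : nat) : (b%:R : 'Z_2)%R = (odd b : nat)%:R%R.
Proof. by rewrite -(Zp_nat_mod (isT : 1 < 2)) modn2. Qed.

Lemma Z2_bool_inj (b c : bool) : ((b : nat)%:R : 'Z_2)%R = (c : nat)%:R%R -> b = c.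
Proof. by case: b; case: c => // /eqP. Qed.

Lemma sum_bool (T : finType) (B : {set T}) (b : pred T) :
  \sum_(i in B) (b i : nat) = #|[set i in B | b i]|.
Proof.
rewrite -sum1dep_card big_mkcondr /=; apply: eq_bigr => i _.
by case: (b i).
Qed.

Section HammingColumns.
Variable m : nat.
Local Notation n := (2 ^ m).

Definition F2m := {ffun 'I_m -> 'Z_2}.

Definition column (i : 'I_n) : F2m :=
  [ffun k : 'I_m => (odd ((i + 1) %/ 2 ^ k) : nat)%:R]%R.

Lemma F2m_char2 (g : F2m) : (g + g = 0)%R.
Proof.
apply/ffunP => k; rewrite !ffunE.
by case: (g k) => [[|[|]]] //= ?; apply/val_inj.
Qed.

Lemma column_inj : injective column.
Proof.
move=> i j /ffunP e.
have ev : (i + 1) %% n = (j + 1) %% n.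
  apply: (@bits_inj m); rewrite ?ltn_mod ?expn_gt0 // => k km.
  by have := e (Ordinal km); rewrite !ffunE => /Z2_bool_inj; rewrite -!odd_div_mod.
by apply/val_inj/eqP; move: ev => /eqP; rewrite eqn_modDr !modn_small.
Qed.

Lemma column_bij : bijective column.
Proof. by apply: inj_card_bij column_inj _; rewrite card_ffun !card_ord. Qed.

Lemma wsum_column (B : {set 'I_n}) k : wsum column B k =
  ((odd #|[set i in B | (i < n - 1) && odd ((i + 1) %/ 2 ^ k)]| : nat)%:R)%R.
Proof.
rewrite /wsum sum_ffunE.
under eq_bigr => i _ do rewrite ffunE.
rewrite -natr_sum sum_bool Z2_nat; congr ((odd _ : nat)%:R)%R.
apply: eq_card => i; rewrite !inE.
case: (i \in B) => //=; apply/idP/andP => [o|[]//]; split => //.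
case: (ltnP i (n - 1)) => // ge.
have ei : i + 1 = n by have := ltn_ord i; lia.
by move: o; rewrite (@odd_div_mod _ m) ?ltn_ord // ei modnn div0n.
Qed.

Lemma hamming_syndrome_zeroE (B : {set 'I_n}) :
  hamming_syndrome_zero B = (wsum column B == 0%R).
Proof.
apply/forallP/eqP => [H|H k].
  by apply/ffunP => k; rewrite wsum_column ffunE; move: (H k); case: odd.
have := congr1 (fun g : F2m => g k) H; rewrite wsum_column ffunE.
by case: odd => // /(@Z2_bool_inj true false).
Qed.

(* A word of even weight always satisfies the parity check; we need weight 4. *)
Lemma parity_bit_ok4 (B : {set 'I_n}) : #|B| = 4 -> parity_bit_ok B.
Proof.
move=> c4; rewrite /parity_bit_ok.
have := card_split B (fun i : 'I_n => i < n - 1); rewrite c4.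
case: existsP => [[j /andP[jB /eqP jv]]|nj].
  have -> : #|[set b in B | ~~ (b < n - 1)]| = 1.
    apply/eqP/cards1P; exists j; apply/setP => i; rewrite !inE.
    apply/andP/eqP => [[iB ge]|->]; last by rewrite jB jv ltnn.
    by apply/val_inj; have := ltn_ord i; rewrite /= jv; lia.
  by move=> e; rewrite -(addnK 1 #|_|) e.
have -> : #|[set b in B | ~~ (b < n - 1)]| = 0.
  apply: eq_card0 => i; rewrite !inE; apply/negP => /andP[iB ge].
  by apply: nj; exists i; rewrite iB /=; have := ltn_ord i; lia.
by rewrite addn0 => ->.
Qed.

Lemma hamming_SQS_block (B : {set 'I_n}) : (B \in hamming_SQS m) = is_block column B.
Proof.
rewrite inE /is_block /ext_hamming_codeword hamming_syndrome_zeroE.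
by case: (eqVneq #|B| 4) => //= c4; rewrite parity_bit_ok4 // andbT.
Qed.

Lemma nblocksE (X : {set 'I_n}) : nblocks X = nblk column X.
Proof. by apply: eq_card => B; rewrite !inE -hamming_SQS_block inE. Qed.
End HammingColumns.

Section JohnsonHamming.
Variable m : nat.
Hypothesis hm : 4 <= m.
Local Notation n := (2 ^ m).
Variable h : F2m m -> 'I_n.
Hypotheses (fK : cancel (@column m) h) (hK : cancel h (@column m)).
Local Notation V := (johnson_vertex n 6).
Local Notation J := (johnson_adj n 6).

Definition block_class k : {set V} := [set x | nblocks (val x) == k].

Lemma many_points : 16 <= #|'I_n|.
Proof. by rewrite card_ord -[16]/(2 ^ 4) leq_exp2l. Qed.

Lemma card_vertex (x : V) : #|val x| = 6. Proof. exact/eqP/(valP x). Qed.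

Lemma J_sym : symmetric J. Proof. by move=> x y; rewrite /johnson_adj setIC. Qed.

Lemma nbrs_classE (x : V) k :
  nbrs_in J x (block_class k) = nbr_count (@column m) (val x) k.
Proof.
rewrite /nbrs_in /nbr_count /swap_count.
rewrite -(johnson_nbrs_count x (fun Y => nblk (@column m) Y == k)).
by apply: eq_card => w; rewrite !inE nblocksE.
Qed.

Lemma nbrs_class0 (x : V) : x \in block_class 0 ->
  [/\ nbrs_in J x (block_class 0) = 6 * (n - 16), nbrs_in J x (block_class 1) = 60
    & nbrs_in J x (block_class 3) = 0].
Proof.
rewrite !nbrs_classE inE nblocksE => /eqP n0.
by have := nbr_counts_free fK hK (@F2m_char2 m) (card_vertex x) n0; rewrite card_ord.
Qed.

Lemma nbrs_class1 (x : V) : x \in block_class 1 ->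
  [/\ nbrs_in J x (block_class 0) = 4 * (n - 15),
      nbrs_in J x (block_class 1) = 2 * (n - 9) + 36
    & nbrs_in J x (block_class 3) = 6].
Proof.
rewrite !nbrs_classE inE nblocksE => /eqP n1.
by have := nbr_counts_one fK hK (@F2m_char2 m) (card_vertex x) many_points n1;
  rewrite card_ord.
Qed.

Lemma nbrs_class3 (x : V) : x \in block_class 3 ->
  [/\ nbrs_in J x (block_class 0) = 0, nbrs_in J x (block_class 1) = 6 * (n - 8)
    & nbrs_in J x (block_class 3) = 12].
Proof.
rewrite !nbrs_classE inE nblocksE => /eqP n3.
by have := nbr_counts_three fK hK (@F2m_char2 m) (card_vertex x) n3; rewrite card_ord.
Qed.

Lemma nbr_exists (x : V) A : 0 < nbrs_in J x A -> exists2 y, y \in A & J y x.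
Proof.
by case/card_gt0P => y; rewrite inE => /andP[yA xy]; exists y; rewrite // J_sym.
Qed.

Lemma class_cover (x : V) :
  [|| x \in block_class 0, x \in block_class 1 | x \in block_class 3].
Proof.
rewrite !inE nblocksE.
exact: nblk_six_cases fK hK (@F2m_char2 m) _ (card_vertex x).
Qed.

Lemma class_disjoint k k' : k != k' -> [disjoint block_class k & block_class k'].
Proof.
move=> kk'; rewrite -setI_eq0; apply/eqP/setP => x; rewrite !inE.
by case: eqP => // ->; rewrite (negbTE kk').
Qed.

Lemma no_edge03 (x y : V) : x \in block_class 0 -> y \in block_class 3 -> ~~ J x y.
Proof.
move=> /nbrs_class0[_ _ /eqP] + y3; rewrite cards_eq0 => /eqP/setP/(_ y).
by rewrite in_set0 in_set y3 /= => ->.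
Qed.

Lemma class1_down (y : V) : y \in block_class 1 ->
  exists2 x, x \in block_class 0 & J x y.
Proof.
move=> /nbrs_class1[n0 _ _]; apply: nbr_exists; rewrite n0.
by have := many_points; rewrite card_ord; lia.
Qed.

Lemma class3_down (y : V) : y \in block_class 3 ->
  exists2 x, x \in block_class 1 & J x y.
Proof.
move=> /nbrs_class3[_ n1 _]; apply: nbr_exists; rewrite n1.
by have := many_points; rewrite card_ord; lia.
Qed.

Lemma hamming_layers :
  [/\ layer J (block_class 0) 0 = block_class 0,
      layer J (block_class 0) 1 = block_class 1,
      layer J (block_class 0) 2 = block_class 3
    & forall i, 2 < i -> layer J (block_class 0) i = set0].
Proof.
exact: three_class_layers class_cover (@class_disjoint 0 1 isT)
  (@class_disjoint 0 3 isT) (@class_disjoint 1 3 isT) no_edge03 class1_down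
  class3_down.
Qed.

(* Both extreme classes are nonempty: follow the edges down from any vertex,
   or up from a block-free one. *)
Lemma class0_nonempty : block_class 0 != set0.
Proof.
have /card_gt0P[X] : 0 < #|[set X : {set 'I_n} | #|X| == 6]|.
  by rewrite card_draws bin_gt0 (leq_trans _ many_points).
rewrite inE => cX; pose x : V := exist _ X cX.
apply/set0Pn; case/or3P: (class_cover x) => [x0|/class1_down[y y0 _]|].
- by exists x.
- by exists y.
- by case/class3_down=> y /class1_down[z z0 _] _; exists z.
Qed.

Lemma class3_nonempty : block_class 3 != set0.
Proof.
have /set0Pn[x /nbrs_class0[_ n1 _]] := class0_nonempty.
have [|y /nbrs_class1[_ _ n3] _] := nbr_exists (x := x) (A := block_class 1).
  by rewrite n1.
have [|z z3 _] := nbr_exists (x := y) (A := block_class 3); first by rewrite n3.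
by apply/set0Pn; exists z.
Qed.

Lemma hamming_regular : completely_regular J (block_class 0).
Proof.
apply: (three_class_regular class_cover (@class_disjoint 0 1 isT)
  (@class_disjoint 0 3 isT) (@class_disjoint 1 3 isT) no_edge03 class1_down
  class3_down class0_nonempty).
- by move=> x /nbrs_class0[-> -> _].
- by move=> x /nbrs_class1[-> -> ->].
- by move=> x /nbrs_class3[_ -> ->].
Qed.

Lemma hamming_radius : covering_radius J (block_class 0) 2.
Proof.
exact: three_class_radius class_cover (@class_disjoint 0 1 isT)
  (@class_disjoint 0 3 isT) (@class_disjoint 1 3 isT) no_edge03 class1_down
  class3_down class3_nonempty.
Qed.
End JohnsonHamming.

Theorem theorem5p1 (m : nat) (hm : 4 <= m) :
  let J := johnson_adj (2 ^ m) 6 in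
  let C : {set johnson_vertex (2 ^ m) 6} :=
    [set x | nblocks (val x) == 0] in
  completely_regular J C /\
  covering_radius J C 2 /\
  layer J C 0 = C /\
  layer J C 1 = [set x | nblocks (val x) == 1] /\
  layer J C 2 = [set x | nblocks (val x) == 3] /\
  (forall x y, x \in layer J C 0 -> y \in layer J C 2 -> ~~ J x y) /\
  (forall x, x \in layer J C 1 -> nbrs_in J x (layer J C 2) = 6).
Proof.
move=> J C; have [h fK hK] := column_bij m.
have [L0 L1 L2 _] := hamming_layers hm fK hK.
have eC : C = block_class m 0 by [].
rewrite /J eC L0 L1 L2; split; first exact: (hamming_regular hm fK hK).
split; first exact: (hamming_radius hm fK hK).
do 3!split => //; split; first exact: no_edge03 fK hK.
by move=> x /(nbrs_class1 hm fK hK)[_ _ ->].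
Qed.
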